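(* Let $F_c$ be a family and let $w$ be a weight function on $\bigcup F_c$ (i.e., $w(a) > 0$ for some $a \in \bigcup F_c$). If $\mathrm{fs}(F', w, \bigcup F_c) \ge 0$ for every $F' \in \mathrm{uce}(F_c)$, then $F_c$ is an FC-family.
   Context: All sets and families (sets of sets) are finite. A family $F$ is union closed if $A\cup B\in F$ for all $A,B\in F$; it is union closed for $F_c$ if it is union closed and $A \cup B \in F$ for all $A \in F$, $B \in F_c$. The union closed extensions of $F_c$ are $\mathrm{uce}(F_c) = \{F' : F' \subseteq \mathcal{P}(\bigcup F_c),\ F' \text{ union closed for } F_c\}$. A family $F$ is Frankl's if there is $a \in \bigcup F$ with $2\cdot|\{A\in F: a\in A\}| \ge |F|$; $F_c$ is an FC-family if every union-closed family $F\supseteq F_c$ is Frankl's. A weight function is a map $w$ from elements to $\mathbb{N}$; it is a weight function on $A$ if $w(a)>0$ for some $a\in A$. $\mathrm{sw}(w,A)=\sum_{a\in A} w(a)$. The share of a set $A$ w.r.t. $w$ and a set $X$ is the integer $\mathrm{ss}(A,w,X) = 2\,\mathrm{sw}(w,A) - \mathrm{sw}(w,X)$, and the share of a family is $\mathrm{fs}(F,w,X)=\sum_{A\in F}\mathrm{ss}(A,w,X)$. *)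

From HB Require Import structures.
From mathcomp Require Import all_boot all_order all_algebra.
Set Implicit Arguments. Unset Strict Implicit. Unset Printing Implicit Defensive.
Import Order.TTheory GRing.Theory Num.Theory.

Definition union_closed (T : finType) (F : {set {set T}}) : Prop :=
  forall A B, A \in F -> B \in F -> A :|: B \in F.

Definition union_closed_for (T : finType) (F Fc : {set {set T}}) : Prop :=
  union_closed F /\ (forall A B, A \in F -> B \in Fc -> A :|: B \in F).

Definition uce (T : finType) (Fc : {set {set T}}) : {set {set {set T}}} :=
  [set F' : {set {set T}} | (F' \subset powerset (cover Fc)) &&
            [forall A in F', forall B in F', A :|: B \in F'] &&
            [forall A in F', forall B in Fc, A :|: B \in F']].

Definition Frankls (T : finType) (F : {set {set T}}) : Prop :=
  exists2 a, a \in cover F & #|F| <= 2 * #|[set A in F | a \in A]|.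

(* FC-family: every union-closed family F ⊇ Fc (over an arbitrary finite
   ground set, into which the ground set T of Fc is embedded injectively)
   is Frankl's. *)
Definition FC_family (T : finType) (Fc : {set {set T}}) : Prop :=
  forall (U : finType) (f : T -> U), injective f ->
  forall F : {set {set U}}, union_closed F ->
    [set f @: A | A : {set T} in Fc] \subset F -> Frankls F.

Definition weight_on (T : finType) (w : T -> nat) (A : {set T}) : Prop :=
  exists2 a, a \in A & 0 < w a.

Definition sw (T : finType) (w : T -> nat) (A : {set T}) : nat := \sum_(a in A) w a.

Definition ss (T : finType) (A : {set T}) (w : T -> nat) (X : {set T}) : int :=
  ((2 * sw w A)%:Z - (sw w X)%:Z)%R.

Definition fs (T : finType) (F : {set {set T}}) (w : T -> nat) (X : {set T}) : int :=
  (\sum_(A in F) ss A w X)%R.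

From HB Require Import structures.
From mathcomp Require Import all_boot all_order all_algebra.
Import Order.TTheory GRing.Theory Num.Theory.

Set Implicit Arguments. Unset Strict Implicit. Unset Printing Implicit Defensive.

(* Let F be union closed, containing an injective image f(Fc) of Fc, and let
   C := cover Fc.  Pull each A in F back to g A := C :&: f^-1(A).  Grouping the
   members of F by their part A \ f(C) outside the image of C, each group (a
   "fibre") is mapped injectively by g onto a union-closed extension of Fc, so
   its share is nonnegative by hypothesis; summing over the fibres,
     #|F| * sw w C <= 2 * \sum_(A in F) sw w (g A)
                    = \sum_(a in C) 2 * deg_F (f a) * w a
   by double counting.  A weighted averaging argument then yields a point a of
   positive weight with #|F| <= 2 * deg_F (f a), i.e. a Frankl witness f a. *)

Lemma weighted_average_witness (I : finType) (P : {pred I}) (w p : I -> nat) c :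
  (exists2 a, a \in P & 0 < w a) ->
  \sum_(a in P) c * w a <= \sum_(a in P) p a * w a ->
  exists2 a, a \in P & (0 < w a) && (c <= p a).
Proof.
move=> [a0 Pa0 w_a0] le_sum; apply/exists_inP; apply: contraLR le_sum.
move=> /exists_inPn small_p; rewrite -ltnNge.
have termwise a : a \in P -> p a * w a <= c * w a ?= iff (w a == 0).
  move=> Pa; apply/leqifP; have [->|w_a] := posnP (w a); first by rewrite !muln0.
  rewrite ltn_pmul2r // ltnNge.
  by have := small_p a Pa; rewrite w_a.
rewrite (ltn_leqif (leqif_sum termwise)); apply/forall_inP => /(_ a0 Pa0).
by rewrite eqn0Ngt w_a0.
Qed.

Lemma Frankls_of_degree (U : finType) (F : {set {set U}}) (u : U) :
  0 < #|F| -> #|F| <= 2 * #|[set A in F | u \in A]| -> Frankls F.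
Proof.
move=> F_gt0 half_u; exists u => //.
have /card_gt0P[A] : 0 < #|[set A in F | u \in A]|.
  by rewrite lt0n; apply: contraTneq half_u => ->; rewrite -ltnNge.
by rewrite inE => /andP[AF uA]; apply/bigcupP; exists A.
Qed.

Lemma sum_ss (T I : finType) (P : {pred I}) (h : I -> {set T}) w X :
  (\sum_(i in P) ss (h i) w X =
   (2 * \sum_(i in P) sw w (h i))%:Z - (#|P| * sw w X)%:Z)%R.
Proof.
rewrite /ss sumrB big_distrr -sum_nat_const /=.
by rewrite !(big_morph Posz PoszD (erefl _)).
Qed.

Section Pullback.
Variables (T U : finType) (f : T -> U) (C : {set T}).

Definition pullback (A : {set U}) : {set T} := C :&: f @^-1: A.

Lemma pullback_sub A : pullback A \subset C.
Proof. exact: subsetIl. Qed.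

Lemma pullbackU A B : pullback (A :|: B) = pullback A :|: pullback B.
Proof. by rewrite /pullback preimsetU setIUr. Qed.

Lemma imset_pullback A : f @: pullback A = f @: C :&: A.
Proof.
apply/setP => u; apply/imsetP/setIP => [[a] | [/imsetP[a aC ->] fa_A]].
  by rewrite !inE => /andP[aC fa_A] ->; split; first exact: imset_f.
by exists a; rewrite // !inE aC.
Qed.

Lemma pullback_inj_outside (K : {set U}) :
  {in [pred A | A :\: f @: C == K] &, injective pullback}.
Proof.
move=> A B /eqP A_out /eqP B_out gAB.
by rewrite -(setID A (f @: C)) -(setID B (f @: C)) A_out B_out
  !(setIC _ (f @: C)) -!imset_pullback gAB.
Qed.

Lemma sum_sw_pullback (w : T -> nat) (F : {set {set U}}) :
  \sum_(A in F) sw w (pullback A) =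
  \sum_(a in C) #|[set A in F | f a \in A]| * w a.
Proof.
have sw_pullback A : sw w (pullback A) = \sum_(a in C) (f a \in A) * w a.
  rewrite /sw big_mkcond [RHS]big_mkcond; apply: eq_bigr => a _.
  by rewrite /pullback !inE; case: (a \in C); case: (f a \in A); rewrite ?mul1n.
rewrite (eq_bigr _ (fun A _ => sw_pullback A)) exchange_big /=.
apply: eq_bigr => a _; rewrite -big_distrl /= -sum1_card; congr (_ * _).
rewrite big_mkcond [RHS]big_mkcond; apply: eq_bigr => A _.
by rewrite inE; case: (A \in F); case: (f a \in A).
Qed.

Hypothesis f_inj : injective f.

Lemma pullback_imset (B : {set T}) : B \subset C -> pullback (f @: B) = B.
Proof.
move=> BC; apply/setP => a; rewrite !inE (mem_imset _ _ f_inj).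
by apply/andP/idP => [[] | aB] //; split=> //; apply: (subsetP BC).
Qed.

End Pullback.

Section Fibres.
Variables (T U : finType) (f : T -> U) (Fc : {set {set T}}) (F : {set {set U}}).
Hypotheses (f_inj : injective f) (F_uc : union_closed F)
  (Fc_in_F : [set f @: B | B : {set T} in Fc] \subset F).

Local Notation C := (cover Fc).
Local Notation g := (pullback f C).

Definition fibre (K : {set U}) : {set {set U}} :=
  [set A in F | A :\: f @: C == K].

Lemma image_in_F (B : {set T}) : B \in Fc -> f @: B \in F.
Proof. by move=> BFc; apply: (subsetP Fc_in_F); apply: imset_f. Qed.

Lemma fibreU K A B :
  A \in fibre K -> B \in F -> B :\: f @: C \subset K -> A :|: B \in fibre K.
Proof.
rewrite !inE => /andP[AF /eqP A_out] BF B_out.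
by rewrite F_uc //= setDUl A_out; apply/eqP/setUidPl.
Qed.

Lemma pullback_fibre_uce K : g @: fibre K \in uce Fc.
Proof.
rewrite inE -andbA; apply/and3P; split.
- by apply/subsetP => _ /imsetP[A _ ->]; rewrite inE pullback_sub.
- apply/forall_inP => _ /imsetP[A AK ->]; apply/forall_inP => _ /imsetP[B BK ->].
  move: (BK); rewrite inE => /andP[BF /eqP B_out].
  by rewrite -pullbackU imset_f // fibreU // B_out subxx.
- apply/forall_inP => _ /imsetP[A AK ->]; apply/forall_inP => B BFc.
  have BC : B \subset C by apply: bigcup_sup.
  rewrite -(pullback_imset f_inj BC) -pullbackU; apply: imset_f.
  apply: fibreU => //; first exact: image_in_F.
  by move: (imsetS f BC); rewrite -setD_eq0 => /eqP ->; rewrite sub0set.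
Qed.

Lemma pullback_share_ge0 (w : T -> nat) :
  (forall F', F' \in uce Fc -> (0 <= fs F' w C)%R) ->
  (0 <= \sum_(A in F) ss (g A) w C)%R.
Proof.
move=> uce_ge0; rewrite (partition_big (fun A => A :\: f @: C) predT) //=.
apply: sumr_ge0 => K _.
have -> : (\sum_(A in F | A :\: f @: C == K) ss (g A) w C =
           \sum_(A in fibre K) ss (g A) w C)%R.
  by apply: eq_bigl => A; rewrite inE.
rewrite -(big_imset (fun S => ss S w C)); first exact/uce_ge0/pullback_fibre_uce.
move=> A B /[!inE] /andP[_ A_out] /andP[_ B_out].
exact: (pullback_inj_outside (K := K)).
Qed.

End Fibres.

Theorem theorem1 (T : finType) (Fc : {set {set T}}) (w : T -> nat) :
  weight_on w (cover Fc) ->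
  (forall F' : {set {set T}}, F' \in uce Fc -> (0 <= fs F' w (cover Fc))%R) ->
  FC_family Fc.
Proof.
move=> [a0 a0_C w_a0] uce_ge0 U f f_inj F F_uc Fc_in_F.
pose deg u := #|[set A in F | u \in A]|.
have F_gt0 : 0 < #|F|.
  move/bigcupP: a0_C => [B BFc _]; apply/card_gt0P; exists (f @: B).
  exact: image_in_F Fc_in_F _ BFc.
have weighted : \sum_(a in cover Fc) #|F| * w a <=
                \sum_(a in cover Fc) (2 * deg (f a)) * w a.
  move: (pullback_share_ge0 f_inj F_uc Fc_in_F uce_ge0).
  rewrite sum_ss subr_ge0 lez_nat sum_sw_pullback /sw !big_distrr /=.
  by under [X in _ <= X]eq_bigr do rewrite mulnA.
have [a _ /andP[_ half_fa]] :=
  weighted_average_witness (ex_intro2 _ _ a0 a0_C w_a0) weighted.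
exact: Frankls_of_degree F_gt0 half_fa.
Qed.
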